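(* Let $\eta\in\{0,1\}$ and $\alpha\in\{-1,1\}$. Let $\vec G$ be a digraph without loops or multiple arcs, with vertex set $\{v_1,\dots,v_n\}$ and $m$ arcs, and define $$g(\vec G;x)=d_2\big(xI_n-\eta D(\vec G)-\alpha A(\vec G)\big).$$ Then $$(m-n)\,g(\vec G;x)+x\,g'(\vec G;x)=\sum_{\vec e\in E(\vec G)} g(\vec G-\vec e;x),$$ where $g'$ is the derivative with respect to $x$ and $\vec G-\vec e$ is $\vec G$ with the arc $\vec e$ deleted (so $g(\vec G-\vec e;x)=d_2(xI_n-\eta D(\vec G-\vec e)-\alpha A(\vec G-\vec e))$).
   Context: For a digraph $\vec H$ on vertices $v_1,\dots,v_n$, $A(\vec H)=(a_{ij})$ is the adjacency matrix with $a_{ij}=1$ if $(v_i,v_j)$ is an arc and $0$ otherwise, and $D(\vec H)=\mathrm{diag}(d^-(v_1),\dots,d^-(v_n))$ is the diagonal matrix of in-degrees. For an $n\times n$ matrix $M=(m_{ij})$ ($n\ge 2$), the second immanant is $d_2(M)=\sum_{\sigma\in S_n}\chi_2(\sigma)\prod_{s=1}^n m_{s\sigma(s)}$, where $\chi_2$ is the irreducible character of $S_n$ corresponding to the partition $(2,1^{n-2})$. *)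

From HB Require Import structures.
From mathcomp Require Import all_boot all_order all_algebra fingroup perm.
Set Implicit Arguments. Unset Strict Implicit. Unset Printing Implicit Defensive.
Import Order.TTheory GRing.Theory Num.Theory.
Local Open Scope ring_scope.

(* A digraph on vertices 'I_n (v_{i+1} <-> i) is given by its arc set
   E : {set 'I_n * 'I_n}; (i, j) \in E means the arc (v_i, v_j).
   A set has no multiple arcs; looplessness is the predicate below. *)
Definition loopless n (E : {set 'I_n * 'I_n}) : Prop :=
  forall e, e \in E -> e.1 != e.2.

Definition adjmx (R : pzRingType) n (E : {set 'I_n * 'I_n}) : 'M[R]_n :=
  \matrix_(i, j) (((i, j) \in E)%:R).

Definition indeg n (E : {set 'I_n * 'I_n}) (j : 'I_n) : nat :=
  #|[set k | (k, j) \in E]|.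

Definition indegmx (R : pzRingType) n (E : {set 'I_n * 'I_n}) : 'M[R]_n :=
  \matrix_(i, j) ((i == j)%:R * (indeg E j)%:R).

(* chi_2 : irreducible character of S_n for the partition (2,1^{n-2}),
   i.e. sign tensor the standard character: chi_2(s) = sgn(s) (fix(s) - 1). *)
Definition chi2 n (s : 'S_n) : int :=
  (-1) ^+ s * ((#|[set i | s i == i]|)%:Z - 1).

Definition d2 (R : comPzRingType) n (M : 'M[R]_n) : R :=
  \sum_(s : 'S_n) (chi2 s)%:~R * \prod_(i < n) M i (s i).

Definition gpoly (R : comNzRingType) n (eta alpha : R) (E : {set 'I_n * 'I_n})
  : {poly R} :=
  d2 ('X%:M - eta%:P *: indegmx _ E - alpha%:P *: adjmx _ E).

From mathcomp Require Import all_boot all_order all_algebra fingroup perm.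
From mathcomp Require Import ring.
Import Order.TTheory GRing.Theory Num.Theory.
Set Implicit Arguments. Unset Strict Implicit. Unset Printing Implicit Defensive.
Local Open Scope ring_scope.

(* Deleting an arc (a, j) only changes column j of x I - eta D - alpha A, and
   summing the modified column over the d^-(v_j) arcs entering v_j gives
   (d^-(v_j) - 1) times the column plus x times its derivative.  Expanding a
   product of one entry per column along that column, summing over j and
   using sum_j d^-(v_j) = m gives the identity for every diagonal product
   M_{t(1),1} ... M_{t(n),n}, hence by linearity for every immanant. *)

Lemma deriv_big_prod (R : comNzRingType) (I : eqType) (r : seq I)
    (F : I -> {poly R}) :
  uniq r ->
  (\prod_(i <- r) F i)^`() = \sum_(k <- r) (F k)^`() * \prod_(i <- r | i != k) F i.
Proof.
elim: r => [|a r IH] /=; first by rewrite !big_nil -polyC1 derivC.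
case/andP=> ar ur; rewrite !big_cons derivM IH // eqxx /=.
rewrite -[\prod_(i <- r | i != a) F i]big_filter -rem_filter // rem_id //.
congr (_ + _); rewrite mulr_sumr !big_seq; apply: eq_bigr => k kr.
have ak : a != k by apply: contraNneq ar => ->.
by rewrite big_cons ak mulrCA.
Qed.

Definition immanant (R : comPzRingType) n (chi : 'S_n -> int) (M : 'M[R]_n) : R :=
  \sum_(s : 'S_n) (chi s)%:~R * \prod_(i < n) M i (s i).

Lemma prod_perm_col (R : comPzRingType) n (M : 'M[R]_n) (s : 'S_n) :
  \prod_(i < n) M i (s i) = \prod_(j < n) M ((s^-1)%g j) j.
Proof. by rewrite (reindex_inj (@perm_inj _ s^-1)); under eq_bigr do rewrite permKV. Qed.

Section InDegree.

Variables (n : nat) (E : {set 'I_n * 'I_n}).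

Lemma card_arcs_into j : #|[set e in E | e.2 == j]| = indeg E j.
Proof.
have -> : [set e in E | e.2 == j] = (fun k => (k, j)) @: [set k | (k, j) \in E].
  apply/setP => -[a b]; rewrite inE /=; apply/andP/imsetP.
    by case=> abE /eqP eb; exists a; rewrite ?inE -?eb.
  by case=> k; rewrite inE => kE [-> ->].
by rewrite card_imset // => x y [].
Qed.

Lemma sum_indeg : \sum_(j < n) indeg E j = #|E|.
Proof.
rewrite -sum1_card (partition_big snd xpredT) //=; apply: eq_bigr => j _.
by rewrite -card_arcs_into sum1_card cardsE.
Qed.

Lemma indeg_setD1_head e : e \in E -> indeg E e.2 = (indeg (E :\ e) e.2).+1.
Proof.
case: e => a b eE /=.
rewrite /indeg (cardsD1 a) [in X in (X + _)%N]inE eE add1n; congr _.+1.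
by apply: eq_card => k; rewrite !inE xpair_eqE eqxx andbT.
Qed.

Lemma indeg_setD1_other e j : e.2 != j -> indeg (E :\ e) j = indeg E j.
Proof.
case: e => a b /= bj; apply: eq_card => k.
by rewrite !inE xpair_eqE (eq_sym j) (negbTE bj) andbF.
Qed.

End InDegree.

Section Pencil.

Variables (R : comNzRingType) (eta alpha : R) (n : nat).
Implicit Types (E : {set 'I_n * 'I_n}) (e : 'I_n * 'I_n).

Definition gmx E : 'M[{poly R}]_n :=
  'X%:M - eta%:P *: indegmx _ E - alpha%:P *: adjmx _ E.

Lemma gmxE E i j :
  gmx E i j = (i == j)%:R * ('X - eta%:P * (indeg E j)%:R)
              - alpha%:P * ((i, j) \in E)%:R.
Proof. by rewrite !mxE; case: eqP => _; rewrite ?mulr1n ?mulr0n; ring. Qed.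

Lemma deriv_gmxE E i j : (gmx E i j)^`() = (i == j)%:R.
Proof. by rewrite gmxE !derivE !mul0rn; ring. Qed.

Lemma gmx_setD1_other E e i j : e.2 != j -> gmx (E :\ e) i j = gmx E i j.
Proof.
move=> ej; rewrite !gmxE indeg_setD1_other // in_setD1.
by case: e ej => a b /= bj; rewrite xpair_eqE (eq_sym j) (negbTE bj) andbF.
Qed.

Lemma gmx_setD1_head E e i : e \in E ->
  gmx (E :\ e) i e.2
  = gmx E i e.2 + (i == e.2)%:R * eta%:P + (e == (i, e.2))%:R * alpha%:P.
Proof.
case: e => a b /= abE; rewrite !gmxE (indeg_setD1_head abE) in_setD1 -addn1 natrD.
rewrite !xpair_eqE eqxx !andbT (eq_sym a).
by case: (eqVneq i a) => [->|_]; rewrite ?abE /=; ring.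
Qed.

Lemma sum_gmx_setD1 E i j :
  \sum_(e in E | e.2 == j) gmx (E :\ e) i j =
  ((indeg E j)%:R - 1) * gmx E i j + 'X * (gmx E i j)^`().
Proof.
rewrite (eq_bigr (fun e => gmx E i j + (i == j)%:R * eta%:P
                            + (e == (i, j))%:R * alpha%:P)); last first.
  by move=> e /andP[eE /eqP <-]; rewrite gmx_setD1_head.
have sum_const_into (c : {poly R}) : \sum_(e in E | e.2 == j) c = (indeg E j)%:R * c.
  rewrite mulr_natl -card_arcs_into -sumr_const.
  by apply: eq_bigl => e; rewrite inE.
have hit_ij : \sum_(e in E | e.2 == j) (e == (i, j))%:R = ((i, j) \in E)%:R :> {poly R}.
  case ijE: ((i, j) \in E); last first.
    by rewrite big1 // => e /andP[eE _]; case: eqP eE => // ->; rewrite ijE.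
  rewrite (bigD1 (i, j)) ?ijE ?eqxx //= big1 ?addr0 // => e /andP[_ ne].
  by rewrite (negbTE ne).
rewrite !big_split /= !sum_const_into -mulr_suml hit_ij deriv_gmxE gmxE; ring.
Qed.

Lemma arc_deletion_col_prod E (t : 'I_n -> 'I_n) :
  ((#|E|)%:R - n%:R) * \prod_(j < n) gmx E (t j) j
    + 'X * (\prod_(j < n) gmx E (t j) j)^`()
  = \sum_(e in E) \prod_(j < n) gmx (E :\ e) (t j) j.
Proof.
have delete_col e : \prod_(j < n) gmx (E :\ e) (t j) j
    = gmx (E :\ e) (t e.2) e.2 * \prod_(j < n | j != e.2) gmx E (t j) j.
  rewrite (bigD1 e.2) //=; congr (_ * _); apply: eq_bigr => j.
  by rewrite eq_sym; apply: gmx_setD1_other.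
have m_sub_n : (#|E|)%:R - n%:R = \sum_(j < n) ((indeg E j)%:R - 1) :> {poly R}.
  by rewrite -sum_indeg natr_sum sumrB sumr_const card_ord.
under [RHS]eq_bigr do rewrite delete_col.
rewrite (partition_big snd xpredT) //= m_sub_n deriv_big_prod ?index_enum_uniq //.
rewrite mulr_suml mulr_sumr -big_split /=; apply: eq_bigr => j _.
under [RHS]eq_bigr => e /andP[_ /eqP ->] do [].
rewrite -mulr_suml sum_gmx_setD1 (bigD1 j) //=; ring.
Qed.

Lemma arc_deletion_immanant (chi : 'S_n -> int) E :
  ((#|E|)%:R - n%:R) * immanant chi (gmx E) + 'X * (immanant chi (gmx E))^`()
  = \sum_(e in E) immanant chi (gmx (E :\ e)).
Proof.
rewrite /immanant exchange_big raddf_sum !mulr_sumr -big_split /=.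
apply: eq_bigr => s _; rewrite derivM derivMz -polyC1 derivC mul0rz mul0r add0r.
under [RHS]eq_bigr do rewrite prod_perm_col.
rewrite -mulr_sumr prod_perm_col -arc_deletion_col_prod; ring.
Qed.

End Pencil.

Theorem lemma3p5 (R : comNzRingType) (n : nat) (eta alpha : R)
  (E : {set 'I_n * 'I_n}) :
  (2 <= n)%N ->
  (eta = 0 \/ eta = 1) -> (alpha = -1 \/ alpha = 1) ->
  loopless E ->
  ((#|E|)%:R - n%:R) * gpoly eta alpha E + 'X * (gpoly eta alpha E)^`()
  = \sum_(e in E) gpoly eta alpha (E :\ e).
Proof. by move=> _ _ _ _; apply: (arc_deletion_immanant eta alpha (@chi2 n)). Qed.
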